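(* Let $x=(x_1,\ldots,x_n)\in[\ell]^n$ be a minimal non-crossing sequence in which exactly $\ell$ distinct values occur. Then $n\le 4\ell$.
   Context: A sequence $x\in[\ell]^n$ is non-crossing if for all $1\le i<j<k<l\le n$ we have $x_i\ne x_k$, or $x_j\ne x_l$, or $x_i=x_j=x_k=x_l$. It is minimal if there is no index $i$ with $x_i=x_{i+1}=x_{i+2}$. Here $[\ell]=\{1,\ldots,\ell\}$. *)

From mathcomp Require Import all_boot.
Set Implicit Arguments. Unset Strict Implicit. Unset Printing Implicit Defensive.

(* A sequence x = (x_1,...,x_n) is represented as s : seq nat with
   x_{i+1} = nth 0 s i (0-based positions). *)

Definition in_range (l : nat) (s : seq nat) : Prop :=
  forall i, i < size s -> 1 <= nth 0 s i <= l.

Definition non_crossing (s : seq nat) : Prop :=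
  forall i j k m, i < j -> j < k -> k < m -> m < size s ->
    nth 0 s i <> nth 0 s k \/ nth 0 s j <> nth 0 s m \/
    (nth 0 s i = nth 0 s j /\ nth 0 s j = nth 0 s k /\ nth 0 s k = nth 0 s m).

Definition minimal (s : seq nat) : Prop :=
  forall i, i.+2 < size s ->
    ~ (nth 0 s i = nth 0 s i.+1 /\ nth 0 s i.+1 = nth 0 s i.+2).

From mathcomp Require Import all_boot zify.

Set Implicit Arguments.
Unset Strict Implicit.
Unset Printing Implicit Defensive.

(* Call position i a last occurrence if x_i does not occur after i, and a
   first occurrence if x_i does not occur before i; distinct positions of
   either kind carry distinct values, so there are at most l of each.
   If x_j <> x_{j+1}, then j is a last or j+1 a first occurrence: otherwise
   x_r = x_{j+1} for some r < j and x_k = x_j for some k > j+1, and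
   r < j < j+1 < k would be a crossing.  By minimality two of x_i, x_{i+1},
   x_{i+2} differ (or the sequence ends at i or i+1), so every position i
   sees a last occurrence at i or i+1 or a first occurrence at i+1 or i+2.
   Counting gives n <= 2l + 2l. *)

Section SeqIndices.

Variables (T : eqType) (x0 : T).

Lemma mem_drop_nthP (x : T) i s :
  reflect (exists2 k, i < k < size s & nth x0 s k = x) (x \in drop i.+1 s).
Proof.
apply: (iffP (nthP x0)); rewrite size_drop.
- by case=> k lt_k <-; exists (i.+1 + k); [lia | rewrite nth_drop].
- case=> k /andP[lt_ik lt_k] <-; exists (k - i.+1); first lia.
  by rewrite nth_drop subnKC.
Qed.

Lemma mem_take_nthP (x : T) i s : i <= size s ->
  reflect (exists2 k, k < i & nth x0 s k = x) (x \in take i s).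
Proof.
move=> le_i; apply: (iffP (nthP x0)); rewrite size_takel //.
- by case=> k lt_k <-; exists k; rewrite ?nth_take.
- by case=> k lt_k <-; exists k; rewrite ?nth_take.
Qed.

Lemma count_iota_le_size_undup (P : pred nat) s :
  {in P &, injective (nth x0 s)} -> count P (iota 0 (size s)) <= size (undup s).
Proof.
move=> inj_P; rewrite -size_filter -(size_map (nth x0 s)).
apply: uniq_leq_size => [|x /mapP[i]].
- rewrite map_inj_in_uniq ?filter_uniq ?iota_uniq // => i j.
  by rewrite !mem_filter => /andP[Pi _] /andP[Pj _]; exact: inj_P.
- rewrite mem_filter mem_iota => /andP[_ /andP[_ lt_i]] ->.
  by rewrite mem_undup mem_nth.
Qed.

End SeqIndices.

Lemma count_predU_le (T : Type) (a b : pred T) r :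
  count (predU a b) r <= count a r + count b r.
Proof. by rewrite -count_predUI leq_addr. Qed.

Lemma count_iota_succ_le (P : pred nat) n :
  (forall k, n <= k -> P k = false) ->
  count (fun i => P i.+1) (iota 0 n) <= count P (iota 0 n).
Proof.
move=> P_out.
have -> : count (fun i => P i.+1) (iota 0 n) = count P (iota 1 n).
  by rewrite (iotaDl 1 0) count_map.
have -> : count P (iota 0 n) = count P (iota 0 n.+1).
  by rewrite -addn1 iotaD count_cat /= P_out ?addn0.
exact: leq_addl.
Qed.

Definition last_occ (s : seq nat) i :=
  (i < size s) && (nth 0 s i \notin drop i.+1 s).

Definition first_occ (s : seq nat) i :=
  (i < size s) && (nth 0 s i \notin take i s).

Lemma last_occ_oversize s k : size s <= k -> last_occ s k = false.
Proof. by rewrite /last_occ ltnNge => ->. Qed.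

Lemma first_occ_oversize s k : size s <= k -> first_occ s k = false.
Proof. by rewrite /first_occ ltnNge => ->. Qed.

Lemma last_occ_inj s : {in last_occ s &, injective (nth 0 s)}.
Proof.
move=> i j; wlog lt_ij : i j / i < j.
  move=> wlog_ij Li Lj eq_ij; case: (ltngtP i j) => [lt_ij|lt_ji|//].
  - exact: wlog_ij.
  - exact/esym/wlog_ij.
move=> /andP[_ /mem_drop_nthP last_i] /andP[lt_j _] eq_ij; exfalso.
by apply: last_i; exists j; rewrite ?lt_ij ?lt_j ?eq_ij.
Qed.

Lemma first_occ_inj s : {in first_occ s &, injective (nth 0 s)}.
Proof.
move=> i j; wlog lt_ij : i j / i < j.
  move=> wlog_ij Fi Fj eq_ij; case: (ltngtP i j) => [lt_ij|lt_ji|//].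
  - exact: wlog_ij.
  - exact/esym/wlog_ij.
move=> _ /andP[lt_j first_j] eq_ij; exfalso.
by move/(mem_take_nthP 0 _ (ltnW lt_j)): first_j; apply; exists i.
Qed.

Lemma last_occ_last s j : j.+1 = size s -> last_occ s j.
Proof. by move=> def_s; rewrite /last_occ -def_s ltnSn drop_oversize ?def_s. Qed.

Lemma non_crossing_last_or_first_occ s j :
  non_crossing s -> j.+1 < size s -> nth 0 s j != nth 0 s j.+1 ->
  last_occ s j || first_occ s j.+1.
Proof.
move=> NC lt_j1 neq_j; rewrite /last_occ /first_occ (ltnW lt_j1) lt_j1 /=.
apply/norP=> -[/negPn/(mem_drop_nthP 0)[k /andP[lt_jk lt_k] eq_k]].
move/negPn/(mem_take_nthP 0 _ (ltnW lt_j1))=> [r lt_r eq_r].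
have neq_k : k != j.+1 by apply: contraNneq neq_j => def_k; rewrite -eq_k def_k.
have neq_r : r != j by apply: contraNneq neq_j => def_r; rewrite -eq_r def_r.
have [|[|[_ [eq_j _]]]] := NC r j j.+1 k ltac:(lia) (ltnSn j) ltac:(lia) lt_k.
- by rewrite eq_r.
- by rewrite eq_k.
- by rewrite eq_j eqxx in neq_j.
Qed.

Lemma minimal_non_crossing_cover s i :
  non_crossing s -> minimal s -> i < size s ->
  [|| last_occ s i, last_occ s i.+1, first_occ s i.+1 | first_occ s i.+2].
Proof.
move=> NC min_s lt_i.
have [lt_i1|ge_i1] := ltnP i.+1 (size s); last by rewrite last_occ_last //; lia.
have [eq_i|neq_i] := eqVneq (nth 0 s i) (nth 0 s i.+1); last first.
  have := non_crossing_last_or_first_occ NC lt_i1 neq_i.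
  by case/orP=> ->; rewrite ?orbT.
have [lt_i2|ge_i2] := ltnP i.+2 (size s); last first.
  by rewrite (@last_occ_last s i.+1) ?orbT //; lia.
have neq_i1 : nth 0 s i.+1 != nth 0 s i.+2 by apply/eqP=> eq_i1; exact: (min_s i).
have := non_crossing_last_or_first_occ NC lt_i2 neq_i1.
by case/orP=> ->; rewrite ?orbT.
Qed.

Theorem lemma3p3 (l : nat) (s : seq nat) :
  in_range l s -> non_crossing s -> minimal s ->
  size (undup s) = l ->
  size s <= 4 * l.
Proof.
move=> _ NC min_s <-; set I := iota 0 (size s).
set L1 := fun i => last_occ s i.+1; set F1 := fun i => first_occ s i.+1.
set F2 := fun i => first_occ s i.+2.
have cover : size s = count (predU (last_occ s) (predU L1 (predU F1 F2))) I.
  apply/esym/eqP; rewrite -{1}(size_iota 0 (size s)) -all_count; apply/allP=> i.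
  by rewrite mem_iota => /andP[_ lt_i]; exact: minimal_non_crossing_cover.
have L_le : count (last_occ s) I <= size (undup s).
  exact: count_iota_le_size_undup (@last_occ_inj s).
have F_le : count (first_occ s) I <= size (undup s).
  exact: count_iota_le_size_undup (@first_occ_inj s).
have L1_le := count_iota_succ_le (@last_occ_oversize s).
have F1_le := count_iota_succ_le (@first_occ_oversize s).
have F2_le := @count_iota_succ_le F1 _
  (fun k le_k => first_occ_oversize (leqW le_k)).
have := count_predU_le (last_occ s) (predU L1 (predU F1 F2)) I.
have := count_predU_le L1 (predU F1 F2) I; have := count_predU_le F1 F2 I.
rewrite /I /L1 /F1 /F2 /= in cover L_le F_le L1_le F1_le F2_le *; lia.
Qed.
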